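(* Let $p,q\in\mathbb{N}$ be coprime, $k\in\mathbb{N}$ squarefree, $m=-pk$, $n=qk$, and let $P\in E(m,n)(\mathbb{Q})$ be a rational point which is neither the neutral element nor one of the three points of order $2$. Let $(X_0:X_1:X_2:X_3)=\psi(P)\in Q(m,n)(\mathbb{Q})$ (so $X_1\neq0$), put $\alpha=X_2/X_1$, $\beta=X_0/X_1$, $\gamma=X_3/X_1$, so that $\alpha^2=\beta^2-pk$ and $\gamma^2=\beta^2+qk$ (the associated triple of rational squares $\alpha^2\le\beta^2<\gamma^2$ in arithmetic progression of step $k$), and let $\Delta$ be the triangle with sides $a=|\gamma|+|\alpha|$, $b=|\gamma|-|\alpha|$, $c=2|\beta|$, whose angle $\theta$ between the sides $a$ and $b$ satisfies $\cos\theta=(q-p)/(q+p)$. Then the following are equivalent: (i) $P$ has order $4$; (ii) $\alpha^2=0$, i.e. the triple of squares contains $0$; (iii) $a=b$, i.e. $\Delta$ is isosceles with the angle $\theta$ between its two equal sides.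
   Context: $E(m,n)$ is the elliptic curve $y^2=x(x+m)(x+n)$ (projectively $Y^2T=X(X+mT)(X+nT)$ with coordinates $(T:X:Y)$), with neutral element the point at infinity and points of order 2 $(0,0),(-m,0),(-n,0)$. $Q(m,n)\subset\mathbb{P}^3$ is the curve $X_0^2+mX_1^2=X_2^2,\ X_0^2+nX_1^2=X_3^2$. $\psi:E(m,n)\to Q(m,n)$ is the isomorphism of curves extending the rational map $(T:X:Y)\mapsto\bigl(-(X+mT)(Y^2-m(X+nT)^2) : 2Y(X+nT)(X+mT) : -(X+mT)(Y^2+m(X+nT)^2) : -(X+nT)(Y^2+n(X+mT)^2)\bigr)$; it maps the neutral element and the three points of order 2 to the points $(1:0:\pm1:\pm1)$ and all other rational points to points with $X_1\neq0$. *)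

From HB Require Import structures.
From mathcomp Require Import all_boot all_order all_algebra.
Set Implicit Arguments. Unset Strict Implicit. Unset Printing Implicit Defensive.
Import Order.TTheory GRing.Theory Num.Theory.
Local Open Scope ring_scope.

Definition squarefree (k : nat) : Prop :=
  forall p : nat, prime p -> ~ (p * p %| k)%N.

(* Points of E(m,n) : y^2 = x (x+m) (x+n) over Q, in projective closure:
   None is the point at infinity (neutral element), Some (x,y) the affine
   point (T:X:Y) = (1:x:y). *)
Definition ecpt := option (rat * rat).

Definition on_E (m n : rat) (P : ecpt) : Prop :=
  match P with
  | None => True
  | Some (x, y) => y ^+ 2 = x * (x + m) * (x + n)
  end.

(* Chord-tangent group law on y^2 = x^3 + a2 x^2 + a4 x with
   a2 = m + n, a4 = m n, neutral element the point at infinity. *)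
Definition ec_add (m n : rat) (P Q : ecpt) : ecpt :=
  match P, Q with
  | None, _ => Q
  | _, None => P
  | Some (x1, y1), Some (x2, y2) =>
      if (x1 == x2) && (y1 == - y2) then None
      else
        let l := if x1 == x2
                 then (3 * x1 ^+ 2 + 2 * (m + n) * x1 + m * n) / (2 * y1)
                 else (y2 - y1) / (x2 - x1) in
        let x3 := l ^+ 2 - (m + n) - x1 - x2 in
        Some (x3, - (l * (x3 - x1) + y1))
  end.

Fixpoint ec_mul (m n : rat) (j : nat) (P : ecpt) : ecpt :=
  match j with
  | O => None
  | S j' => ec_add m n P (ec_mul m n j' P)
  end.

Definition ec_order (m n : rat) (P : ecpt) (d : nat) : Prop :=
  (0 < d)%N /\ ec_mul m n d P = None /\
  (forall j : nat, (0 < j)%N -> (j < d)%N -> ec_mul m n j P <> None).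

(* psi : E(m,n) -> Q(m,n), evaluated at an affine point (1:x:y) via the
   defining rational map (valid whenever the result is nonzero, in particular
   at all points other than O and the 2-torsion points). *)
Definition psi (m n x y : rat) : rat * rat * rat * rat :=
  (- (x + m) * (y ^+ 2 - m * (x + n) ^+ 2),
   2 * y * (x + n) * (x + m),
   - (x + m) * (y ^+ 2 + m * (x + n) ^+ 2),
   - (x + n) * (y ^+ 2 + n * (x + m) ^+ 2)).

From HB Require Import structures.
From mathcomp Require Import all_boot all_order all_algebra.
From mathcomp Require Import ring.
Set Implicit Arguments. Unset Strict Implicit. Unset Printing Implicit Defensive.
Import Order.TTheory GRing.Theory Num.Theory.
Local Open Scope ring_scope.

(* Write 2P = (x3, y3) for the tangent construction.  P has order 4 exactly
   when 2P has order 2, i.e. when y3 = 0.  From 4 y^2 x3 = (x^2 - m n)^2 and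
   m n < 0 we get x3 > 0 > -n, so the only possible 2-torsion value is
   x3 = -m, and 4 y^2 (x3 + m) = (x^2 + 2 m x + m n)^2.  That quadratic is
   also -2 y alpha, and |gamma| + |alpha| = |gamma| - |alpha| iff alpha = 0. *)

Section Doubling.
Variables m n : rat.

Definition tangent_slope (x y : rat) : rat :=
  (3 * x ^+ 2 + 2 * (m + n) * x + m * n) / (2 * y).
Definition double_x (x y : rat) : rat := tangent_slope x y ^+ 2 - (m + n) - x - x.
Definition double_y (x y : rat) : rat := - (tangent_slope x y * (double_x x y - x) + y).

Lemma ec_add_eq_None (x1 y1 x2 y2 : rat) :
  ec_add m n (Some (x1, y1)) (Some (x2, y2)) = None -> x1 = x2 /\ y1 = - y2.
Proof. by rewrite /=; case: ifP => // /andP[/eqP -> /eqP ->]. Qed.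

Lemma ec_addN (x y : rat) : ec_add m n (Some (x, y)) (Some (x, - y)) = None.
Proof. by rewrite /= opprK !eqxx. Qed.

Lemma ec_add_chord (x1 y1 x2 y2 : rat) : x1 != x2 ->
  let l := (y2 - y1) / (x2 - x1) in
  let x3 := l ^+ 2 - (m + n) - x1 - x2 in
  ec_add m n (Some (x1, y1)) (Some (x2, y2)) = Some (x3, - (l * (x3 - x1) + y1)).
Proof. by move=> /negbTE hx; rewrite /= hx. Qed.

Lemma affine_nontorsion (x y : rat) : y ^+ 2 = x * (x + m) * (x + n) ->
  (x, y) <> (0, 0) -> (x, y) <> (- m, 0) -> (x, y) <> (- n, 0) ->
  [/\ y != 0, x + m != 0 & x + n != 0].
Proof.
move=> onE nonO nonTm nonTn.
have y_neq0 : y != 0.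
  apply/eqP => y0; move: onE; rewrite y0 expr0n => /esym/eqP.
  rewrite !mulf_eq0 !addr_eq0 => /orP[/orP[] |] /eqP h.
  - by apply: nonO; rewrite h y0.
  - by apply: nonTm; rewrite h y0.
  - by apply: nonTn; rewrite h y0.
have sq_neq0 : y ^+ 2 != 0 by rewrite sqrf_eq0.
split=> //; apply/eqP => h; move: sq_neq0; by rewrite onE h !(mulr0, mul0r) eqxx.
Qed.

Section Point.
Variables x y : rat.
Hypothesis onE : y ^+ 2 = x * (x + m) * (x + n).
Hypothesis y_neq0 : y != 0.

Let F := 3 * x ^+ 2 + 2 * (m + n) * x + m * n.

Lemma mul_tangent_slope : 2 * y * tangent_slope x y = F.
Proof. by rewrite /tangent_slope mulrC divfK // mulf_neq0. Qed.

Lemma ec_mul2 : ec_mul m n 2 (Some (x, y)) = Some (double_x x y, double_y x y).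
Proof.
have yNy : (y == - y) = false by rewrite -addr_eq0 -mulr2n mulrn_eq0 /= (negbTE y_neq0).
by rewrite /= eqxx yNy.
Qed.

Lemma double_onE : double_y x y ^+ 2 = double_x x y * (double_x x y + m) * (double_x x y + n).
Proof.
have := mul_tangent_slope; rewrite /double_y /double_x.
move: (tangent_slope x y) => l hl; rewrite sqrrN.
have -> : (l * (l ^+ 2 - (m + n) - x - x - x) + y) ^+ 2 =
  (l ^+ 2 - (m + n) - x - x) * (l ^+ 2 - (m + n) - x - x + m) * (l ^+ 2 - (m + n) - x - x + n)
  + (y ^+ 2 - x * (x + m) * (x + n)) + (2 * y * l - F) * (l ^+ 2 - (m + n) - x - x - x).
  by rewrite /F; ring.
by rewrite onE hl !subrr mul0r !addr0.
Qed.

Lemma mul_double_x : 4 * y ^+ 2 * double_x x y = (x ^+ 2 - m * n) ^+ 2.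
Proof.
have -> : 4 * y ^+ 2 * double_x x y =
  (2 * y * tangent_slope x y) ^+ 2 - 4 * y ^+ 2 * (m + n + 2 * x) by rewrite /double_x; ring.
by rewrite mul_tangent_slope onE /F; ring.
Qed.

(* If the line of slope [l] through [P] and [(x2, y2)] meets the cubic a third
   time at [P] again, then [P] is a double root, so the line is the tangent. *)
Lemma chord_tangent_slope (x2 y2 l : rat) :
  y2 ^+ 2 = x2 * (x2 + m) * (x2 + n) -> x2 != x ->
  y2 = y + l * (x2 - x) -> l ^+ 2 - (m + n) - x - x2 = x ->
  l = tangent_slope x y.
Proof.
move=> onE2 hx2 hy2 hx.
have : (2 * y * l - F) * (x2 - x) = 0.
  have -> : (2 * y * l - F) * (x2 - x) =
    ((y + l * (x2 - x)) ^+ 2 - x2 * (x2 + m) * (x2 + n)) - (y ^+ 2 - x * (x + m) * (x + n))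
    - (l ^+ 2 - (m + n) - x - x2 - x) * (x2 - x) ^+ 2 by rewrite /F; ring.
  by rewrite -hy2 onE2 onE hx !subrr mul0r subr0.
move/eqP; rewrite mulf_eq0 [x2 - x == 0]subr_eq0 (negbTE hx2) orbF subr_eq0 -mul_tangent_slope.
by move/eqP/mulfI; apply; rewrite mulf_neq0.
Qed.

(* [double_y x y = 0] says that 2P is a point of order 2. *)
Lemma ec_order4_double_y : ec_order m n (Some (x, y)) 4 <-> double_y x y = 0.
Proof.
have eq_x3 : double_x x y = x -> double_y x y = - y.
  by move=> hx; rewrite /double_y hx subrr mulr0 add0r.
have mulS j : ec_mul m n j.+1 (Some (x, y)) = ec_add m n (Some (x, y)) (ec_mul m n j (Some (x, y))).
  by [].
split.
  case=> _ [mul4 mul_neq]; have mul3 := mul_neq 3%N isT isT.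
  rewrite mulS ec_mul2 in mul3; rewrite mulS mulS ec_mul2 in mul4.
  have [hx3 | hx3] := eqVneq (double_x x y) x.
    by move: mul3; rewrite hx3 eq_x3 // ec_addN.
  move: mul4 mul3; rewrite ec_add_chord 1?eq_sym //=.
  set l := (_ - y) / _; set x4 := l ^+ 2 - _ - _ - _.
  case/ec_add_eq_None => /esym hx4 _ _.
  have hl : l = tangent_slope x y.
    apply: (chord_tangent_slope (l := l) double_onE hx3) => //.
    by rewrite /l divfK ?subr_eq0 // addrC subrK.
  have h1 : double_y x y = y + tangent_slope x y * (double_x x y - x).
    by rewrite -hl /l divfK ?subr_eq0 // addrC subrK.
  have h2 : double_y x y = - (tangent_slope x y * (double_x x y - x) + y) by [].
  have : double_y x y + double_y x y = 0 by rewrite {1}h1 h2; ring.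
  by move/eqP; rewrite -mulr2n mulrn_eq0 => /eqP.
move=> y3_eq0.
have hx3 : double_x x y != x.
  by apply/eqP => /eq_x3; rewrite y3_eq0 => /eqP; rewrite eq_sym oppr_eq0 (negbTE y_neq0).
have mul3 : ec_mul m n 3 (Some (x, y)) = Some (x, - y).
  rewrite mulS ec_mul2 y3_eq0 ec_add_chord 1?eq_sym //.
  have -> : (0 - y) / (double_x x y - x) = tangent_slope x y.
    apply: (mulIf (_ : double_x x y - x != 0)); first by rewrite subr_eq0.
    rewrite divfK ?subr_eq0 // sub0r; apply/eqP; rewrite -subr_eq0 -y3_eq0 /double_y.
    by apply/eqP; ring.
  by rewrite /double_x; congr (Some (_, _)); ring.
split=> //; split; first by rewrite mulS mul3 ec_addN.
case=> [//|[|[|[|j]]]] // _ _; first by rewrite ec_mul2.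
by rewrite mul3.
Qed.

Lemma double_y_eq0 : m < 0 -> 0 < n ->
  (double_y x y == 0) = (x ^+ 2 + 2 * m * x + m * n == 0).
Proof.
move=> m_lt0 n_gt0.
have y2_gt0 : 0 < 4 * y ^+ 2 by rewrite mulr_gt0 // exprn_even_gt0.
have x3_gt0 : 0 < double_x x y.
  rewrite -(pmulr_rgt0 _ y2_gt0) mul_double_x exprn_gt0 // subr_gt0.
  by apply: (lt_le_trans _ (sqr_ge0 x)); rewrite nmulr_rlt0.
have x3m : (double_x x y + m) * (4 * y ^+ 2) = (x ^+ 2 + 2 * m * x + m * n) ^+ 2.
  by rewrite mulrDl [double_x x y * _]mulrC mul_double_x onE; ring.
rewrite -sqrf_eq0 double_onE !mulf_eq0 (gt_eqF x3_gt0) (gt_eqF (addr_gt0 x3_gt0 n_gt0)) orbF /=.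
have -> : (double_x x y + m == 0) = ((double_x x y + m) * (4 * y ^+ 2) == 0).
  by rewrite mulf_eq0 (gt_eqF y2_gt0) orbF.
by rewrite x3m sqrf_eq0.
Qed.

(* The left-hand side is X2 / X1 for (X0 : X1 : X2 : X3) = psi (x, y). *)
Lemma psi_alpha_ratio : x + m != 0 -> x + n != 0 ->
  - (x + m) * (y ^+ 2 + m * (x + n) ^+ 2) / (2 * y * (x + n) * (x + m))
  = - (x ^+ 2 + 2 * m * x + m * n) / (2 * y).
Proof.
move=> xm_neq0 xn_neq0; apply/eqP.
rewrite eqr_div ?mulf_neq0 // onE; apply/eqP; ring.
Qed.

End Point.
End Doubling.

Lemma normr_add_eq_sub (R : numDomainType) (g a : R) :
  `|g| + `|a| = `|g| - `|a| <-> a = 0.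
Proof.
split=> [/addrI h | ->]; last by rewrite normr0 subr0 addr0.
by apply/normr0_eq0/eqP; rewrite eq_le normr_ge0 andbT {1}h oppr_le0 normr_ge0.
Qed.

Theorem theorem4p6 (p q k : nat) (x y : rat) :
  (0 < p)%N -> (0 < q)%N -> (0 < k)%N ->
  coprime p q -> squarefree k ->
  let m : rat := - (p * k)%:R in
  let n : rat := (q * k)%:R in
  on_E m n (Some (x, y)) ->
  (x, y) <> (0, 0) -> (x, y) <> (- m, 0) -> (x, y) <> (- n, 0) ->
  let '(X0, X1, X2, X3) := psi m n x y in
  let alpha := X2 / X1 in
  let beta := X0 / X1 in
  let gamma := X3 / X1 in
  let a := `|gamma| + `|alpha| in
  let b := `|gamma| - `|alpha| in
  (ec_order m n (Some (x, y)) 4 <-> alpha ^+ 2 = 0) /\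
  (alpha ^+ 2 = 0 <-> a = b).
Proof.
move=> p_gt0 q_gt0 k_gt0 _ _ m n onE nonO nonTm nonTn.
have m_lt0 : m < 0 by rewrite /m oppr_lt0 ltr0n muln_gt0 p_gt0 k_gt0.
have n_gt0 : 0 < n by rewrite /n ltr0n muln_gt0 q_gt0 k_gt0.
clearbody m n.
have [y_neq0 xm_neq0 xn_neq0] := affine_nontorsion onE nonO nonTm nonTn.
rewrite /psi psi_alpha_ratio //.
have alpha2_eq0 : ((- (x ^+ 2 + 2 * m * x + m * n) / (2 * y)) ^+ 2 == 0)
                  = (x ^+ 2 + 2 * m * x + m * n == 0).
  have two_y_neq0 : 2 * y != 0 by rewrite mulf_neq0.
  by rewrite sqrf_eq0 mulf_eq0 oppr_eq0 invr_eq0 (negbTE two_y_neq0) orbF.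
split.
  apply: iff_trans (ec_order4_double_y onE y_neq0) _.
  have := double_y_eq0 onE y_neq0 m_lt0 n_gt0; rewrite -alpha2_eq0 => e.
  by split=> /eqP; [rewrite e | rewrite -e] => /eqP.
split=> [/eqP | /normr_add_eq_sub ->]; last by rewrite expr0n.
by rewrite sqrf_eq0 => /eqP alpha0; apply/normr_add_eq_sub.
Qed.
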